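(* Let $q>10$ be a prime power. There exist $\alpha\in\mathbb{F}_{q^3}\setminus\mathbb{F}_q$ and an $\mathbb{F}_q$-linear functional $f:\mathbb{F}_{q^3}\to\mathbb{F}_q$ such that, with $\beta=1$: (1) $f(\alpha/\beta)\neq 1$, and (2) for all $k\in\mathbb{F}_q$, $k\neq f\left(\frac{\alpha^2}{\beta}\right)+\left(f\left(\frac{\beta^2}{\alpha+k}\right)+k\right)f\left(\frac{\alpha}{\beta}\right)+k f\left(\frac{\beta^2}{\alpha+k}\right)f\left(\frac{1}{\beta}\right)$. *)

From HB Require Import structures.
From mathcomp Require Export all_boot all_order all_algebra all_field.
Set Implicit Arguments. Unset Strict Implicit. Unset Printing Implicit Defensive.

From HB Require Import structures.
From mathcomp Require Import all_boot all_order all_algebra all_field.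
From mathcomp Require Import ring.

(* Pick g outside F, so that 1, g, g^2 is a basis of L and
   g^3 = p0 + p1 g + p2 g^2, and take alpha = g + s together with the form f
   given by f 1 = 0, f g = a, f g^2 = e.  Then f alpha = a and
   f alpha^2 = e + 2 s a, while (g + t)^-1 = cofactor t / N t, where
   N t = N_{L/F}(g + t) is a monic cubic in t.  Multiplying condition (2) for k
   by N (s + k), it fails exactly when h (s + k) = v, for
   h y = (y - z) ((1 - a) N y + a^2), once s and e are solved linearly from
   z and v.  Since N is not constant, z can be chosen so that h takes the same
   value twice; the map h of the finite field F then misses some v. *)

Set Implicit Arguments.
Unset Strict Implicit.
Unset Printing Implicit Defensive.

Import GRing.Theory.
Local Open Scope ring_scope.

Lemma exists_notin (T : finType) (s : seq T) :
  (size s < #|T|)%N -> exists x, x \notin s.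
Proof.
move=> lt_s_T; have [x /= sx | s_full] := pickP [pred x | x \notin s].
  by exists x.
suff: (#|T| <= size s)%N by rewrite leqNgt lt_s_T.
apply: leq_trans (card_size s); apply/subset_leq_card/subsetP => x _.
by apply/negbFE/s_full.
Qed.

Lemma exists_notin_codom (T : finType) (h : T -> T) x y :
  x != y -> h x = h y -> exists v, v \notin codom h.
Proof.
move=> neq_xy eq_hxy; have [v /= hv | onto_h] := pickP [pred v | v \notin codom h].
  by exists v.
have /image_injP inj_h : #|codom h| == #|T|.
  by rewrite eqn_leq max_card; apply/subset_leq_card/subsetP => v _; apply/negbFE/onto_h.
by move: neq_xy; rewrite (inj_h x y) ?eqxx.
Qed.

Lemma exists_missed_value (F : finFieldType) (N : F -> F) (A b u : F) :
  A != 0 -> N u != N 0 -> exists z v, forall y, (y - z) * (A * N y + b) != v.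
Proof.
move=> A0 Nu; pose z := u * (A * N u + b) / (A * (N u - N 0)).
have u0 : 0 != u by apply: contraNneq Nu => <-.
have collide : (0 - z) * (A * N 0 + b) = (u - z) * (A * N u + b).
  by rewrite /z; field; rewrite subr_eq0 Nu A0.
have [v hv] := exists_notin_codom (h := fun y => (y - z) * (A * N y + b)) u0 collide.
by exists z, v => y; apply: contraNneq hv => <-; apply: codom_f.
Qed.

Lemma exists_horner_neq (F : finFieldType) (p : {poly F}) :
  (1 < size p <= #|F|)%N -> exists x, p.[x] != p.[0].
Proof.
case/andP=> gt1_p le_p_F; pose q := p - (p.[0])%:P.
have size_q : size q = size p.
  by rewrite size_addl // size_opp (leq_ltn_trans (size_polyC_leq1 _)).
have nz_q : q != 0 by rewrite -size_poly_eq0 size_q -lt0n ltnW.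
have [x /= qx | q_roots] := pickP [pred x | ~~ root q x].
  by exists x; move: qx; rewrite rootE !hornerE subr_eq0.
have all_roots : all (root q) (enum F) by apply/allP => x _; apply/negbFE/q_roots.
by have := max_poly_roots nz_q all_roots (enum_uniq F); rewrite -cardE size_q ltnNge le_p_F.
Qed.

Section FieldExtension.
Variables (F : fieldType) (L : fieldExtType F).

Lemma exists_notin_1 : (1 < \dim {:L})%N -> exists x : L, x \notin 1%VS.
Proof.
move=> gt1_L; have /subvPn[x _ x1] : ~~ ({:L} <= 1)%VS.
  by apply: contraL gt1_L => /dimvS; rewrite dimv1 -leqNgt.
by exists x.
Qed.

Lemma free_adjoin_powers (x : L) : free (mkseq (GRing.exp x) (adjoin_degree 1 x)).
Proof.
rewrite /free size_mkseq span_def big_map -(subn0 (adjoin_degree _ _)) -/(index_iota _ _).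
rewrite big_mkord subn0.
have := Fadjoin_eq_sum 1%AS x; rewrite /Fadjoin_sum.
under eq_bigr do rewrite prod1v.
by move <-; rewrite dim_Fadjoin dimv1 muln1.
Qed.

Lemma adjoin_degree_prime (x : L) :
  prime (\dim {:L}) -> x \notin 1%VS -> adjoin_degree 1 x = \dim {:L}.
Proof.
move=> pr_L x1; apply: prime_nt_dvdP => //; first by rewrite adjoin_deg_eq1.
by have := dim_Fadjoin 1%AS x; rewrite dimv1 muln1 => <-; apply/field_dimS/subvf.
Qed.
End FieldExtension.

Section DegreeThree.
Variables (F : fieldType) (L : fieldExtType F).
Hypothesis dimL : \dim {:L} = 3%N.

Lemma free_powers3 (g : L) : g \notin 1%VS -> free [:: 1; g; g^+2].
Proof.
move=> g1; have deg_g : adjoin_degree 1 g = 3%N.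
  by rewrite -dimL; apply: adjoin_degree_prime; rewrite ?dimL.
by have := free_adjoin_powers g; rewrite deg_g.
Qed.

Lemma powers3_decomp (g u : L) : free [:: 1; g; g^+2] ->
  exists c0 c1 c2 : F, u = c0%:A + c1%:A * g + c2%:A * g^+2.
Proof.
move=> free_g; pose X := [tuple 1; g; g^+2].
have spanX : span X = fullv.
  by apply/eqP; rewrite eqEdim subvf (eqP free_g); apply/eq_leq/dimL.
do 3!eexists.
rewrite {1}(@coord_span _ _ _ X u) ?spanX ?memvf // !big_ord_recl big_ord0 addr0 !mulr_algl addrA.
reflexivity.
Qed.
End DegreeThree.

Section CoordForm.
Variables (K : fieldType) (vT : vectType K) (n : nat) (X : n.-tuple vT) (c : n.-tuple K).

Definition coord_form (u : vT) : K^o := \sum_(i < n) c`_i * coord X i u.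

Fact coord_form_is_linear : linear coord_form.
Proof.
move=> k u v; rewrite /coord_form scaler_sumr -big_split /=.
by apply: eq_bigr => i _; rewrite linearP /= mulrDr mulrCA.
Qed.

Lemma coord_form_free (j : 'I_n) : free X -> coord_form X`_j = c`_j.
Proof.
move=> free_X; rewrite /coord_form (bigD1 j) //= coord_free // eqxx mulr1 big1 ?addr0 //.
by move=> i /negbTE neq_ij; rewrite coord_free // eq_sym neq_ij mulr0.
Qed.
End CoordForm.

HB.instance Definition _ (K : fieldType) (vT : vectType K) n (X : n.-tuple vT) c :=
  GRing.isLinear.Build K vT K^o *:%R (coord_form X c) (@coord_form_is_linear K vT n X c).

Section CubicExtension.
Variables (F : fieldType) (L : fieldExtType F) (g : L) (p0 p1 p2 : F).
Hypothesis free_g : free [:: 1; g; g^+2].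
Hypothesis g3 : g^+3 = p0%:A + p1%:A * g + p2%:A * g^+2.

(* [normg t] is the norm of [g + t] and [cofactor t] its adjugate. *)
Definition normg (t : F) : F := t^+3 + p2 * t^+2 - p1 * t + p0.

Definition cofactor (t : F) : L := (t^+2 + p2 * t - p1)%:A - (t + p2)%:A * g + g^+2.

Lemma mul_cofactor t : (g + t%:A) * cofactor t = (normg t)%:A.
Proof.
apply/eqP; rewrite -subr_eq0; apply/eqP.
transitivity (g^+3 - (p0%:A + p1%:A * g + p2%:A * g^+2)); last by rewrite g3 subrr.
rewrite /cofactor /normg -!in_algE !rmorphD !rmorphN !rmorphM ?rmorphXn ?rmorph1; ring.
Qed.

Local Notation form a e := (coord_form [tuple 1; g; g^+2] [tuple 0; a; e]).

Lemma form1 a e : form a e 1 = 0. Proof. exact: (coord_form_free _ 0 free_g). Qed.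
Lemma form_g a e : form a e g = a. Proof. exact: (coord_form_free _ 1 free_g). Qed.
Lemma form_g2 a e : form a e (g^+2) = e. Proof. exact: (coord_form_free _ 2 free_g). Qed.

Lemma form_shift a e t : form a e (g + t%:A) = a.
Proof. by rewrite linearD linearZ /= form_g form1 scaler0 addr0. Qed.

Lemma form_shift_sqr a e t : form a e ((g + t%:A)^+2) = e + t *+ 2 * a.
Proof.
rewrite sqrrD mulr_algr scalerMnl exprZn expr1n.
by rewrite !linearD !linearZ /= form_g form_g2 form1 scaler0 addr0.
Qed.

Lemma form_cofactor a e t : form a e (cofactor t) = e - (t + p2) * a.
Proof.
rewrite /cofactor linearD linearB !mulr_algl !linearZ /= form1 form_g form_g2.
by rewrite scaler0 add0r scalerN addrC.
Qed.

Lemma normg_neq0 t : normg t != 0.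
Proof.
apply/eqP => N0; have := mul_cofactor t; rewrite N0 scale0r => /eqP.
rewrite mulf_eq0 => /orP[/eqP shift0 | /eqP cofactor0].
  by have := form_shift 1 0 t; rewrite shift0 linear0 => /eqP; rewrite eq_sym oner_eq0.
have := form_cofactor 0 1 t; rewrite cofactor0 linear0 mulr0 subr0.
by move=> /eqP; rewrite eq_sym oner_eq0.
Qed.

Lemma inv_shift t : (g + t%:A)^-1 = (normg t)^-1 *: cofactor t.
Proof.
by apply: mulr1_eq; rewrite -scalerAr mul_cofactor scalerA mulVf ?normg_neq0 ?scale1r.
Qed.

Lemma form_inv_shift a e t :
  form a e ((g + t%:A)^-1) = (normg t)^-1 * (e - (t + p2) * a).
Proof. by rewrite inv_shift linearZ /= form_cofactor. Qed.
End CubicExtension.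

Lemma exists_normg_neq (F : finFieldType) (p0 p1 p2 : F) :
  (3 < #|F|)%N -> exists u, normg p0 p1 p2 u != normg p0 p1 p2 0.
Proof.
move=> card_F; pose p := Poly [:: p0; - p1; p2; 1].
have pE x : p.[x] = normg p0 p1 p2 x by rewrite horner_Poly /= /normg; ring.
have [|u] := @exists_horner_neq _ p; last by rewrite !pE; exists u.
by rewrite (@PolyK _ 0) ?oner_neq0.
Qed.

Lemma exists_shift_weight (F : fieldType) (a p2 z v : F) : a != 0 -> 1 + a != 0 ->
  exists s e : F, forall k N : F, N != 0 ->
    N * (k - (e + s *+ 2 * a + (N^-1 * (e - (s + k + p2) * a) + k) * a))
    = (s + k - z) * ((1 - a) * N + a^+2) - v.
Proof.
(* [s] and [e] make the coefficient of [N] and the constant term agree. *)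
move=> a0 a1; pose s := (- v - a * z * (2 * a - 1) - a^+2 * p2) / (a * (1 + a)).
exists s, ((1 - a) * z - s * (1 + a)) => k N N0.
by rewrite /s; field; rewrite N0 a0 a1.
Qed.

Theorem proposition4p6 (F : finFieldType) (L : fieldExtType F) :
  (10 < #|F|)%N -> \dim {: L} = 3%N ->
  exists alpha : L, alpha \notin 1%VS /\
  exists f : {linear L -> F^o},
    let beta : L := 1 in
    f (alpha / beta) != 1 /\
    forall k : F,
      k != f (alpha ^+ 2 / beta)
           + (f (beta ^+ 2 / (alpha + k%:A)) + k) * f (alpha / beta)
           + k * f (beta ^+ 2 / (alpha + k%:A)) * f (beta^-1).
Proof.
move=> card_F dimL.
have [g g1] : exists g : L, g \notin 1%VS by apply: exists_notin_1; rewrite dimL.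
have free_g := free_powers3 dimL g1.
have [p0 [p1 [p2 g3]]] := powers3_decomp dimL (g^+3) free_g.
have card3 : (3 < #|F|)%N by apply: ltn_trans card_F.
have [a] := @exists_notin _ [:: 0; 1; -1] card3.
rewrite !inE !negb_or => /and3P[a0 a1 aN1].
have a1B : 1 - a != 0 by rewrite subr_eq0 eq_sym.
have a1D : 1 + a != 0 by rewrite addrC addr_eq0.
have [u Nu] := exists_normg_neq p0 p1 p2 card3.
have [z [v hv]] := exists_missed_value (a^+2) a1B Nu.
have [s [e key]] := exists_shift_weight p2 z v a0 a1D.
exists (g + s%:A); split.
  by apply: contra g1 => alpha1; rewrite -(addrK s%:A g) memvB // memvZ // mem1v.
exists (coord_form [tuple 1; g; g^+2] [tuple 0; a; e]) => /=.
rewrite !divr1 expr1n invr1 (form1 free_g) (form_shift free_g).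
split=> // k; rewrite (form_shift_sqr free_g) div1r -[g + _ + _]addrA -scalerDl.
rewrite (form_inv_shift free_g g3) mulr0 addr0.
apply: contraNneq (hv (s + k)) => eq_k.
by rewrite -subr_eq0 -key ?(normg_neq0 free_g g3) // -eq_k subrr mulr0.
Qed.
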